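(* Let $\mathcal Z$ be an arbitrary set, $\mathcal H\subseteq\{0,1\}^{\mathcal Z}$, and $n\in\mathbb N$ with $n\ge\mathfrak s_0(\mathcal H)$. Let $S=(Z_1,\dots,Z_n)\in\mathcal Z^n$ and for each $h\in\mathcal H$ let $A_h(S)=\{i\in[n]:h(Z_i)=1\}$. Then there exists $I\subseteq[n]$ such that $I\cap A_h(S)\ne\emptyset$ for every $h\in\mathcal H$ with $A_h(S)\ne\emptyset$, and $|I|\le\mathfrak s_0(\mathcal H)$.
   Context: The centered star number $\mathfrak s_0(\mathcal H)$ is the largest $m\in\mathbb N$ such that there exist $z_1,\dots,z_m\in\mathcal Z$ and $h_1,\dots,h_m\in\mathcal H$ with $h_i(z_j)=\mathbf 1\{i=j\}$ for all $i,j\in[m]$, and $\infty$ if no finite maximum exists. *)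

From mathcomp Require Import all_boot.
Set Implicit Arguments. Unset Strict Implicit. Unset Printing Implicit Defensive.

Definition centered_star_witness (Z : Type) (H : (Z -> bool) -> Prop) (m : nat) : Prop :=
  exists (z : 'I_m -> Z) (h : 'I_m -> (Z -> bool)),
    (forall i, H (h i)) /\ (forall i j, h i (z j) = (i == j)).

(* s is the centered star number s0(H): the largest m admitting a witness.
   (If no finite maximum exists, s0(H) = oo and no s satisfies this.) *)
Definition is_centered_star_number (Z : Type) (H : (Z -> bool) -> Prop) (s : nat) : Prop :=
  centered_star_witness H s /\ (forall m, centered_star_witness H m -> m <= s).

Definition A_set (Z : Type) (n : nat) (h : Z -> bool) (S : 'I_n -> Z) : {set 'I_n} :=
  [set i | h (S i)].

(* An inclusion-minimal hitting set I is small: minimality gives, for each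
   i in I, a hypothesis h_i in H whose positive indices meet I exactly in i,
   so the points (Z_i) and hypotheses (h_i), i in I, form a centered star of
   size |I|. *)

From mathcomp Require Import all_boot.
From mathcomp Require Import boolp.

Set Implicit Arguments.
Unset Strict Implicit.
Unset Printing Implicit Defensive.

Definition hitting_set (Z : Type) (H : (Z -> bool) -> Prop) (n : nat)
    (S : 'I_n -> Z) (I : {set 'I_n}) : Prop :=
  forall h, H h -> A_set h S != set0 -> I :&: A_set h S != set0.

Section CenteredStar.

Variables (Z : Type) (H : (Z -> bool) -> Prop).

Lemma centered_star_witness_set (T : finType) (I : {set T}) (z : T -> Z) :
    (forall i, i \in I -> exists2 h, H h & {in I, forall j, h (z j) = (i == j)}) ->
  centered_star_witness H #|I|.
Proof.
move=> star.
have /choice [h hP] : forall k : 'I_#|I|,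
    exists g, H g /\ {in I, forall j, g (z j) = (enum_val k == j)}.
  by move=> k; have [g Hg gz] := star _ (enum_valP k); exists g.
exists (z \o enum_val), h; split=> [k | k l /=]; first by case: (hP k).
by case: (hP k) => _ ->; [rewrite (inj_eq enum_val_inj) | exact: enum_valP].
Qed.

Lemma ex_minimal_hitting_set (n : nat) (S : 'I_n -> Z) :
  exists I, hitting_set H S I /\
            forall i, i \in I -> ~ hitting_set H S (I :\ i).
Proof.
have [I /minsetP [/asboolP hitI minI]] :
    {I | minset (fun I => `[< hitting_set H S I >]) I}.
  by apply: ex_minset; exists setT; apply/asboolP => h _; rewrite setTI.
exists I; split=> // i iI /asboolP/minI/(_ (subD1set I i))/setP/(_ i).
by rewrite !inE eqxx iI.
Qed.

Lemma private_hypothesis_of_minimal (n : nat) (S : 'I_n -> Z)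
    (I : {set 'I_n}) (i : 'I_n) :
    hitting_set H S I -> ~ hitting_set H S (I :\ i) ->
  exists2 h, H h & {in I, forall j, h (S j) = (i == j)}.
Proof.
move=> hitI; apply: contra_notP => no_private h Hh Ah.
apply/negP => /eqP missed.
have outside j : j \in I -> j != i -> h (S j) = false.
  move=> jI ji; apply/negbTE/negP => hj.
  by move/setP: missed => /(_ j); rewrite /A_set !inE ji jI hj.
have hi : h (S i).
  case/set0Pn: (hitI h Hh Ah) => j; rewrite /A_set !inE => /andP[jI hj].
  by case: (eqVneq j i) => [<- // | ji]; rewrite outside in hj.
apply: no_private; exists h => // j jI.
by case: (eqVneq i j) => [<- // | ij]; rewrite outside // eq_sym.
Qed.

End CenteredStar.

(* [Hn] is not needed: the full index set is always a hitting set. *)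
Theorem lemma11 (Z : Type) (H : (Z -> bool) -> Prop) (s n : nat)
  (Hs : is_centered_star_number H s) (Hn : s <= n) (S : 'I_n -> Z) :
  exists I : {set 'I_n},
    (forall h, H h -> A_set h S != set0 -> I :&: A_set h S != set0) /\ #|I| <= s.
Proof.
have [I [hitI minI]] := ex_minimal_hitting_set H S.
exists I; split=> //; apply: Hs.2; apply: (centered_star_witness_set (z := S)).
by move=> i iI; apply: private_hypothesis_of_minimal hitI (minI i iI).
Qed.
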